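(* For every finite capacitated graph $G=(V,E,c_V,c_E)$ with nonnegative vertex and edge capacities, the Rising-Tide algorithm terminates and returns a maximal feasible fractional matching of $G$.
   Context: Let $G=(V,E,c_V,c_E)$ be a graph (edges may include self-loops) with vertex capacities $c_V:V\to\mathbb{R}_{\ge0}$ and edge capacities $c_E:E\to\mathbb{R}_{\ge0}$. A function $\mu:E\to\mathbb{R}_{\ge0}$ is a feasible fractional matching if $\mu(i,j)\le c_E(i,j)$ for every edge and $\sum_j\mu(i,j)\le c_V(i)$ for every vertex $i$, where a self-loop $(i,i)$ counts only once in the sum for $i$. It is maximal if no feasible $\mu'\ne\mu$ satisfies $\mu'\ge\mu$ pointwise. Vertex $i$ is saturated if $\sum_j\mu(i,j)=c_V(i)$; edge $(i,j)$ is saturated if $\mu(i,j)=c_E(i,j)$. Rising-Tide: set $E'=\{e\in E: c_E(e)>0\}$ and $\mu\equiv0$; while $E'\neq\emptyset$: choose the maximum $\delta\ge0$ such that $\mu+\delta\cdot\mathbf{1}_{E'}$ is a feasible fractional matching, set $\mu\gets\mu+\delta\mathbf{1}_{E'}$, and remove from $E'$ every edge $(i,j)$ such that $i$, $j$, or $(i,j)$ is saturated; finally return $\mu$. *)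

From HB Require Import structures.
From mathcomp Require Import all_boot all_order all_algebra.
From mathcomp Require Import reals.
Set Implicit Arguments. Unset Strict Implicit. Unset Printing Implicit Defensive.
Import Order.TTheory GRing.Theory Num.Theory.
Local Open Scope ring_scope.

(* A graph on a finite vertex type V: an edge is an unordered pair {i,j},
   represented as a set of vertices with 1 element (self-loop {i}) or
   2 elements. *)

Section RisingTide.
Variables (R : realType) (V : finType) (E : {set {set V}})
          (cV : V -> R) (cE : {set V} -> R).

Definition graph_edges_ok : Prop :=
  forall e, e \in E -> (0 < #|e| <= 2)%N.

(* total load at vertex i; a self-loop {i} is counted once *)
Definition load (mu : {set V} -> R) (i : V) : R :=
  \sum_(e in E | i \in e) mu e.

Definition feasible (mu : {set V} -> R) : Prop :=
  (forall e, e \notin E -> mu e = 0) /\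
  (forall e, e \in E -> 0 <= mu e /\ mu e <= cE e) /\
  (forall i, load mu i <= cV i).

Definition maximal_feasible (mu : {set V} -> R) : Prop :=
  feasible mu /\
  forall mu', feasible mu' -> (forall e, mu e <= mu' e) -> mu' = mu.

Definition raise (mu : {set V} -> R) (Ep : {set {set V}}) (d : R) :=
  fun e => mu e + (if e \in Ep then d else 0).

Definition remaining (mu : {set V} -> R) (Ep : {set {set V}}) :=
  [set e in Ep | ~~ ((mu e == cE e) || [exists i in e, load mu i == cV i])].

Definition rt_state := ({set {set V}} * ({set V} -> R))%type.

Definition rt_init : rt_state := ([set e in E | 0 < cE e], fun _ => 0).

Definition rt_step (s s' : rt_state) : Prop :=
  s.1 != set0 /\
  exists d : R,
    [/\ 0 <= d, feasible (raise s.2 s.1 d),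
        (forall d', 0 <= d' -> feasible (raise s.2 s.1 d') -> d' <= d),
        s'.2 = raise s.2 s.1 d &
        s'.1 = remaining (raise s.2 s.1 d) s.1].

Definition rt_run (n : nat) (s : nat -> rt_state) : Prop :=
  [/\ s 0%N = rt_init,
      (forall k, (k < n)%N -> rt_step (s k) (s k.+1)) &
      (s n).1 = set0].

End RisingTide.

From HB Require Import structures.
From mathcomp Require Import all_boot all_order all_algebra.
From mathcomp Require Import reals.
From mathcomp Require Import boolp lra.
Set Implicit Arguments. Unset Strict Implicit. Unset Printing Implicit Defensive.
Import Order.TTheory GRing.Theory Num.Theory.
Local Open Scope ring_scope.

(* Rising-Tide keeps three facts invariant: mu is feasible, the active set
   E' is contained in E, and every inactive edge of E is blocked, i.e. saturated
   itself or incident to a saturated vertex; blocking persists because mu only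
   grows.  A round raises all active edges by the largest admissible delta,
   which is the least slack/rate ratio over the edge and vertex constraints, so
   some constraint becomes tight and some active edge retires: the loop stops
   after at most |E| rounds.  Once no edge is active, every edge is blocked, and
   a feasible mu' >= mu must equal mu on a blocked edge, since at a saturated
   endpoint the loads of mu and mu' coincide, forcing equality termwise. *)

Lemma exists_tight_step (R : realFieldType) (T : finType) (a b : T -> R) (c0 : T) :
    0 < a c0 -> (forall c, 0 < a c -> 0 <= b c) ->
  exists d, [/\ 0 <= d, forall c, 0 < a c -> d * a c <= b c
              & exists2 c, 0 < a c & d * a c = b c].
Proof.
move=> ac0 b_ge0.
have [c ac minc] := @arg_minP _ R _ c0 (fun c => 0 < a c) (fun c => b c / a c) ac0.
exists (b c / a c); split.
- by rewrite divr_ge0 ?b_ge0 ?ltW.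
- by move=> c' ac'; rewrite -ler_pdivlMr //; exact: minc.
- by exists c; rewrite // divfK ?gt_eqF.
Qed.

Section RisingTide.
Variables (R : realType) (V : finType) (E : {set {set V}})
          (cV : V -> R) (cE : {set V} -> R).

Local Notation load := (load E).
Local Notation feasible := (feasible E cV cE).
Local Notation remaining := (remaining E cV cE).

Definition blocked (mu : {set V} -> R) (e : {set V}) : Prop :=
  mu e = cE e \/ exists2 i, i \in e & load mu i = cV i.

Lemma blocked_maximal (mu : {set V} -> R) :
  feasible mu -> (forall e, e \in E -> blocked mu e) -> maximal_feasible E cV cE mu.
Proof.
move=> [mu_out [mu_in mu_load]] mu_blocked; split=> //.
move=> mu' [mu'_out [mu'_in mu'_load]] le_mu; apply: funext => e.
have [eE|eNE] := boolP (e \in E); last by rewrite mu_out ?mu'_out.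
case: (mu_blocked e eE) => [mu_e|[i ie load_i]].
  by apply/le_anti; rewrite le_mu mu_e (mu'_in e eE).2.
have sum_diff0 : \sum_(f in E | i \in f) (mu' f - mu f) = 0.
  have : load mu i <= load mu' i by apply: ler_sum => f _.
  by move: (mu'_load i); rewrite sumrB -load_i /load; lra.
apply/subr0_eq/(psumr_eq0P _ sum_diff0); last by rewrite eE ie.
by move=> f _; rewrite subr_ge0.
Qed.

Lemma raise0 (mu : {set V} -> R) (Ep : {set {set V}}) : raise mu Ep 0 = mu.
Proof. by apply: funext => e; rewrite /raise; case: ifP; rewrite addr0. Qed.

Definition incident (Ep : {set {set V}}) (i : V) := [set e in Ep | i \in e].

Lemma load_raise (mu : {set V} -> R) (Ep : {set {set V}}) (d : R) (i : V) :
  Ep \subset E -> load (raise mu Ep d) i = load mu i + d * #|incident Ep i|%:R.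
Proof.
move=> sEpE; rewrite /load /raise big_split /= mulr_natr -sumr_const -big_mkcondr.
congr (_ + _); apply: eq_bigl => e; rewrite inE.
by case: (boolP (e \in Ep)) => [/(subsetP sEpE)->|]; rewrite ?andbT ?andbF.
Qed.

Lemma ler_load_raise (mu : {set V} -> R) (Ep : {set {set V}}) (d : R) (i : V) :
  0 <= d -> load mu i <= load (raise mu Ep d) i.
Proof. by move=> d_ge0; apply: ler_sum => e _; rewrite lerDl; case: ifP. Qed.

Definition raise_rate (Ep : {set {set V}}) (c : {set V} + V) : R :=
  match c with inl e => (e \in Ep)%:R | inr i => #|incident Ep i|%:R end.

Definition slack (mu : {set V} -> R) (c : {set V} + V) : R :=
  match c with inl e => cE e - mu e | inr i => cV i - load mu i end.

Lemma feasible_raiseP (mu : {set V} -> R) (Ep : {set {set V}}) (d : R) :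
    Ep \subset E -> feasible mu -> 0 <= d ->
  feasible (raise mu Ep d) <->
  forall c, 0 < raise_rate Ep c -> d * raise_rate Ep c <= slack mu c.
Proof.
move=> sEpE [mu_out [mu_in mu_load]] d_ge0; split.
  move=> [_ [raise_in raise_load]] [e|i] /=.
    case: (boolP (e \in Ep)) => [eEp _|]; last by rewrite ltxx.
    by have := (raise_in e (subsetP sEpE e eEp)).2; rewrite /raise eEp mulr1; lra.
  by move=> _; have := raise_load i; rewrite load_raise //; lra.
move=> fits; split; [|split].
- move=> e eNE; rewrite /raise mu_out //.
  case: ifP => [eEp|_]; last by rewrite addr0.
  by case/negP: eNE; exact: (subsetP sEpE).
- move=> e eE; rewrite /raise.
  case: ifP => eEp; last by rewrite addr0; exact: mu_in.
  have := fits (inl e); rewrite /= eEp ltr01 mulr1 => /(_ isT).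
  by have := mu_in e eE; case; lra.
- move=> i; rewrite load_raise //; have [->|deg_gt0] := posnP #|incident Ep i|.
    by rewrite mulr0 addr0.
  by have := fits (inr i); rewrite /= ltr0n deg_gt0 => /(_ isT); lra.
Qed.

Lemma slack_ge0 (mu : {set V} -> R) (Ep : {set {set V}}) (c : {set V} + V) :
  Ep \subset E -> feasible mu -> 0 < raise_rate Ep c -> 0 <= slack mu c.
Proof.
move=> sEpE feas_mu rate_gt0.
have := feasible_raiseP sEpE feas_mu (lexx 0); rewrite raise0.
by move=> /iffLR/(_ feas_mu c rate_gt0); rewrite mul0r.
Qed.

Lemma tight_not_remaining (mu : {set V} -> R) (Ep : {set {set V}}) (d : R) c :
    Ep \subset E -> 0 < raise_rate Ep c -> d * raise_rate Ep c = slack mu c ->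
  exists2 e, e \in Ep & e \notin remaining (raise mu Ep d) Ep.
Proof.
move=> sEpE; rewrite /remaining; case: c => [e|i] /= rate_gt0 tight.
  have eEp : e \in Ep by move: rate_gt0; case: (e \in Ep); rewrite ?ltxx.
  exists e => //; rewrite inE eEp negbK /raise eEp.
  by rewrite eEp mulr1 in tight; apply/orP; left; apply/eqP; lra.
have [e] : exists e, e \in incident Ep i.
  by apply/set0Pn; rewrite -card_gt0 -(ltr0n R).
rewrite inE => /andP[eEp ie]; exists e => //; rewrite inE eEp negbK.
apply/orP; right; apply/existsP; exists i; rewrite ie /=.
by rewrite load_raise //; apply/eqP; lra.
Qed.

Definition rt_invariant (s : rt_state R V) : Prop :=
  [/\ feasible s.2, s.1 \subset E
    & forall e, e \in E -> e \notin s.1 -> blocked s.2 e].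

Lemma rt_invariant_init :
  (forall i, 0 <= cV i) -> (forall e, e \in E -> 0 <= cE e) ->
  rt_invariant (rt_init E cE).
Proof.
move=> cV_ge0 cE_ge0; split=> /=.
- do 2?split=> //; first by move=> e eE; rewrite cE_ge0.
  by move=> i; rewrite /load big1_eq.
- by apply/subsetP => e; rewrite inE => /andP[].
- move=> e eE; rewrite inE eE /= -leNgt => cE_le0; left.
  by apply/le_anti; rewrite cE_ge0.
Qed.

Lemma rt_invariant_step (s s' : rt_state R V) :
  rt_invariant s -> rt_step E cV cE s s' -> rt_invariant s'.
Proof.
case: s s' => Ep mu [Ep' mu'] [_ sEpE mu_blocked] [_ [d [d_ge0 feas _ /= -> ->]]].
split=> //=; first by apply/subsetP => e; rewrite inE => /andP[/(subsetP sEpE)].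
move=> e eE; have [eEp|eNEp] := boolP (e \in Ep).
  rewrite inE eEp negbK => /orP[/eqP|/existsP[i /andP[ie /eqP]]]; first by left.
  by right; exists i.
move=> _; case: (mu_blocked e eE eNEp) => [mu_e|[i ie load_i]].
  by left; rewrite /raise (negbTE eNEp) addr0.
right; exists i => //; apply/le_anti; rewrite feas.2.2 -load_i.
exact: ler_load_raise d_ge0.
Qed.

Lemma rt_invariant_done (s : rt_state R V) :
  rt_invariant s -> s.1 = set0 -> maximal_feasible E cV cE s.2.
Proof.
case: s => Ep mu [feas _ mu_blocked] /= Ep0; apply: blocked_maximal => // e eE.
by apply: mu_blocked; rewrite // Ep0 inE.
Qed.

Lemma rt_step_exists (s : rt_state R V) : rt_invariant s -> s.1 != set0 ->
  exists2 s', rt_step E cV cE s s' & (#|s'.1| < #|s.1|)%N.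
Proof.
case: s => Ep mu [/= feas_mu sEpE _] /= Ep_n0; have [e0 e0Ep] := set0Pn _ Ep_n0.
have rate_e0 : 0 < raise_rate Ep (inl e0) by rewrite /= e0Ep ltr01.
have [d [d_ge0 fits [c rate_c tight]]] :=
  exists_tight_step rate_e0 (fun c => slack_ge0 sEpE feas_mu).
have feas_d := iffRL (feasible_raiseP sEpE feas_mu d_ge0) fits.
exists (remaining (raise mu Ep d) Ep, raise mu Ep d).
  split=> //; exists d; split=> // d' d'_ge0.
  move=> /(feasible_raiseP sEpE feas_mu d'_ge0)/(_ c rate_c).
  by rewrite -tight ler_pM2r.
have [e eEp eNrem] := tight_not_remaining sEpE rate_c tight.
apply/proper_card/properP; split; last by exists e.
by apply/subsetP => f; rewrite inE => /andP[].
Qed.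

Lemma rt_run_from (s : rt_state R V) : rt_invariant s ->
  exists n (t : nat -> rt_state R V),
    [/\ t 0%N = s, forall k, (k < n)%N -> rt_step E cV cE (t k) (t k.+1)
      & (t n).1 = set0].
Proof.
move: {-1}#|s.1| (leqnn #|s.1|) => m; elim: m s => [|m IHm] s le_s_m inv_s.
  exists 0%N, (fun _ => s); split=> //.
  by apply: cards0_eq; apply/eqP; rewrite -leqn0.
have [s1_0|s1_n0] := eqVneq s.1 set0; first by exists 0%N, (fun _ => s).
have [s' step_s lt_s'] := rt_step_exists inv_s s1_n0.
have [n [t [t0 t_step tn]]] :=
  IHm s' (leq_trans lt_s' le_s_m) (rt_invariant_step inv_s step_s).
exists n.+1, (fun k => if k is k'.+1 then t k' else s); split=> //.
by case=> [|k] /= lt_k; [rewrite t0|exact: t_step].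
Qed.

End RisingTide.

Theorem lemma10 (R : realType) (V : finType) (E : {set {set V}})
    (cV : V -> R) (cE : {set V} -> R)
    (hE : graph_edges_ok E)
    (hcV : forall i, 0 <= cV i)
    (hcE : forall e, e \in E -> 0 <= cE e) :
  (exists (n : nat) (s : nat -> rt_state R V), rt_run E cV cE n s) /\
  (forall (n : nat) (s : nat -> rt_state R V),
      rt_run E cV cE n s -> maximal_feasible E cV cE (s n).2).
Proof.
have inv_init := rt_invariant_init hcV hcE.
split.
  have [n [s [s0 s_step sn]]] := rt_run_from inv_init.
  by exists n, s; split.
move=> n s [s0 s_step sn]; apply: rt_invariant_done sn.
have inv_s k : (k <= n)%N -> rt_invariant E cV cE (s k).
  elim: k => [|k IHk] le_k; first by rewrite s0.
  exact: rt_invariant_step (IHk (ltnW le_k)) (s_step k le_k).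
exact: inv_s.
Qed.
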